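(* Let $n\ge 2$ and let $S$ be $\mathcal{PI}^{\ast}_n$ or $\overline{\mathcal{PI}^{\ast}}_n$. Up to equivalence, $S$ has exactly one faithful effective transitive representation, and it is a representation into $\mathcal{I}_{2^n-1}$ (i.e. the corresponding set of right cosets has $2^n-1$ elements). In particular, $\mathcal{PI}^{\ast}_n$ and $\overline{\mathcal{PI}^{\ast}}_n$ embed into the symmetric inverse semigroup $\mathcal{I}_{2^n-1}$.
   Context: Let $X=\{1,\dots,n\}$, $X'=\{1',\dots,n'\}$, and let $P_n$ be the set of partitions of $X\cup X'$ each of whose blocks is a singleton (point) or a generalised line (a set meeting both $X$ and $X'$). $\mathcal{PI}^{\ast}_n=(P_n,\star)$, where (with $X''$ a third copy of $X$, regarding $\alpha$ as a partition of $X\cup X''$ and $\beta$ of $X''\cup X'$, and $\sim$ the equivalence on $X\cup X''\cup X'$ generated by the blocks of both) $\alpha\star\beta$ is the partition of $X\cup X'$ in which distinct $u,v$ are in one block iff $u\sim v$ and the $\sim$-class of $u$ contains no singleton block of $\alpha$ or $\beta$. $\overline{\mathcal{PI}^{\ast}}_n=(P_n,\circ)$, where $\alpha\circ\beta$ has as generalised lines exactly the sets $A\cup D'$ with $A\cup B'$ a generalised line of $\alpha$ and $B\cup D'$ a generalised line of $\beta$ (same $B$), other elements being points. Both are inverse semigroups. For an inverse semigroup $S$: the natural partial order is $s\le t$ iff $s=et$ for some idempotent $e$; for $H\subseteq S$, $H\varrho=\{s\in S: s\ge h\text{ for some }h\in H\}$; a closed inverse subsemigroup is an inverse subsemigroup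 $H$ with $H\varrho=H$; $\mathcal{C}_H=\{(Hs)\varrho: ss^{-1}\in H\}$; the effective transitive representation $\phi_H:S\to\mathcal{I}_{\mathcal{C}_H}$ (symmetric inverse semigroup of partial bijections of $\mathcal{C}_H$) is $\phi_H(s)=\{((Hx)\varrho,(Hxs)\varrho): (Hx)\varrho,(Hxs)\varrho\in\mathcal{C}_H\}$; $\phi_H$ and $\phi_K$ are equivalent iff there is $a\in S$ with $a^{-1}Ha\subseteq K$ and $aKa^{-1}\subseteq H$. *)

From mathcomp Require Import all_boot.
Set Implicit Arguments. Unset Strict Implicit. Unset Printing Implicit Defensive.

(* ---------- Generic inverse-semigroup notions ----------
   The semigroup is a carrier S : {set T} inside a finite type T,
   with multiplication mul (only its values on S matter). *)
Section InvSemi.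
Variables (T : finType) (S : {set T}) (mul : T -> T -> T).

(* the (unique, in an inverse semigroup) inverse s^{-1} *)
Definition sinv (s : T) : T :=
  odflt s [pick t in S | (mul (mul s t) s == s) && (mul (mul t s) t == t)].

Definition idem (e : T) : bool := (e \in S) && (mul e e == e).

Definition nleq (s t : T) : bool := [exists e in S, idem e && (s == mul e t)].

Definition upclose (H : {set T}) : {set T} :=
  [set s in S | [exists h in H, nleq h s]].

Definition inv_subsemigroup (H : {set T}) : bool :=
  [&& H \subset S, H != set0,
      [forall h in H, forall k in H, mul h k \in H]
    & [forall h in H, sinv h \in H]].

Definition closed_inv_subsemigroup (H : {set T}) : bool :=
  inv_subsemigroup H && (upclose H == H).

Definition rcoset (H : {set T}) (s : T) : {set T} :=
  upclose [set mul h s | h in H].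

Definition cosets (H : {set T}) : {set {set T}} :=
  [set rcoset H s | s in S & mul s (sinv s) \in H].

(* phi_H(s), as the graph of a partial bijection of C_H *)
Definition phi (H : {set T}) (s : T) : {set ({set T} * {set T})} :=
  [set p | [exists x in S, [&& p == (rcoset H x, rcoset H (mul x s)),
                              rcoset H x \in cosets H &
                              rcoset H (mul x s) \in cosets H]]].

Definition faithful (H : {set T}) : Prop := {in S &, injective (phi H)}.

Definition rep_equiv (H K : {set T}) : bool :=
  [exists a in S,
     ([set mul (mul (sinv a) h) a | h in H] \subset K) &&
     ([set mul (mul a k) (sinv a) | k in K] \subset H)].

End InvSemi.

(* ---------- The partitions P_n ----------
   X u X' is encoded as 'I_n + 'I_n : inl i = i, inr i = i'. *)
Section Partitions.
Variable n : nat.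

Definition XX := ('I_n + 'I_n)%type.
Definition PT := {set {set XX}}.

Definition gline (B : {set XX}) : bool :=
  [exists i, inl i \in B] && [exists j, inr j \in B].

Definition valid (P : PT) : bool :=
  partition P [set: XX] && [forall B in P, (#|B| == 1) || gline B].

Definition Pn : {set PT} := [set P | valid P].

(* --- the product of PI*_n --- ; X u X'' u X' encoded as
   inl (inl i) = i, inl (inr i) = i'', inr i = i'. *)
Definition XXX := ('I_n + 'I_n + 'I_n)%type.

Definition ea (x : XX) : XXX :=
  match x with inl i => inl (inl i) | inr i => inl (inr i) end.
Definition eb (x : XX) : XXX :=
  match x with inl i => inl (inr i) | inr i => inr i end.
Definition eout (x : XX) : XXX :=
  match x with inl i => inl (inl i) | inr i => inr i end.

Definition genrel (a b : PT) : rel XXX := fun u v =>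
  [exists B in a, (u \in ea @: B) && (v \in ea @: B)] ||
  [exists B in b, (u \in eb @: B) && (v \in eb @: B)].

Definition sim (a b : PT) : rel XXX := connect (genrel a b).

Definition from_singleton (a b : PT) (w : XXX) : bool :=
  [exists x, ([set x] \in a) && (w == ea x)] ||
  [exists x, ([set x] \in b) && (w == eb x)].

Definition bad (a b : PT) (u : XX) : bool :=
  [exists w, sim a b (eout u) w && from_singleton a b w].

Definition star (a b : PT) : PT :=
  [set [set v | (v == u) || (sim a b (eout u) (eout v) && ~~ bad a b u)] | u : XX].

Definition lpart (L : {set XX}) : {set 'I_n} := [set i | inl i \in L].
Definition rpart (L : {set XX}) : {set 'I_n} := [set i | inr i \in L].

Definition mkblock (A D : {set 'I_n}) : {set XX} :=
  [set x | match x with inl i => i \in A | inr j => j \in D end].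

Definition circ_lines (a b : PT) : PT :=
  [set mkblock (lpart L) (rpart M) | L in a, M in b &
     [&& gline L, gline M & rpart L == lpart M]].

Definition circ (a b : PT) : PT :=
  circ_lines a b :|: [set [set x] | x in ~: cover (circ_lines a b)].

End Partitions.

From Pilot Require Import Defs.
From mathcomp Require Import all_boot.
Set Implicit Arguments. Unset Strict Implicit. Unset Printing Implicit Defensive.

(* Both semigroups act faithfully by partial bijections of the 2^n - 1 nonempty
   subsets of {1..n}: a partition sends A to D when A u D' is one of its lines
   (circle product) or a union of its lines (star product).  The image is
   closed under inverses and contains every rank-one partial bijection, and for
   any such inverse semigroup of partial bijections of a set D with |D| >= 2
   the claim holds.  The stabiliser H of a point x0 gives a faithful
   representation whose cosets {s | s x0 = B} are indexed by B in D.
   Conversely, a closed inverse subsemigroup K has a least idempotent e.  If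
   rank e = 0 then K = S and phi_K is constant; if rank e >= 2 then phi_K
   vanishes on rank-one elements; either way phi_K is not faithful.  If e is
   the identity of {A}, the rank-one map x0 |-> A conjugates H into K and K
   into H. *)

Section PartialBijections.
Variable V : finType.
Implicit Types f g d : {set V * V}.

Definition rcomp f g : {set V * V} :=
  [set p | [exists y, ((p.1, y) \in f) && ((y, p.2) \in g)]].
Definition rinv f : {set V * V} := [set p | (p.2, p.1) \in f].

Definition pbij f :=
  (forall x y z, (x, y) \in f -> (x, z) \in f -> y = z) /\
  (forall x y z, (x, z) \in f -> (y, z) \in f -> x = y).

Definition partial_id d := [forall p in d, p.1 == p.2].

Lemma rcompP f g x z :
  reflect (exists y, (x, y) \in f /\ (y, z) \in g) ((x, z) \in rcomp f g).
Proof.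
rewrite inE; apply: (iffP existsP) => [[y /andP[]]|[y []]] /=; first by eauto.
by move=> ? ?; exists y; apply/andP.
Qed.

Lemma rinvE f x y : ((x, y) \in rinv f) = ((y, x) \in f).
Proof. by rewrite inE. Qed.

Lemma rinvK : involutive rinv.
Proof. by move=> f; apply/setP => -[x y]; rewrite !rinvE. Qed.

Lemma partial_idP d : reflect (forall x y, (x, y) \in d -> x = y) (partial_id d).
Proof. by apply: (iffP forall_inP) => [H x y /H /eqP | H [x y] /H ->]. Qed.

Lemma pbij_rcomp f g : pbij f -> pbij g -> pbij (rcomp f g).
Proof.
move=> [f1 f2] [g1 g2]; split.
  move=> x y z /rcompP[u [xu uy]] /rcompP[v [xv vz]].
  by rewrite (f1 _ _ _ xu xv) in uy; apply: g1 uy vz.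
move=> x y z /rcompP[u [xu uz]] /rcompP[v [yv vz]].
by rewrite (g2 _ _ _ uz vz) in xu; apply: f2 xu yv.
Qed.

Lemma pbij_rinv f : pbij f -> pbij (rinv f).
Proof. by move=> [f1 f2]; split => x y z; rewrite !rinvE; [apply: f2 | apply: f1]. Qed.

Lemma rcomp_rinvK f : pbij f -> rcomp (rcomp f (rinv f)) f = f.
Proof.
move=> [_ f2]; apply/setP => -[x y]; apply/idP/idP.
  case/rcompP => q [/rcompP[p [xp]]]; rewrite rinvE => qp.
  by rewrite (f2 _ _ _ xp qp).
move=> xy; apply/rcompP; exists x; split => //; apply/rcompP; exists y.
by rewrite rinvE.
Qed.

Lemma pbij_inverse_uniq f g : pbij f -> pbij g ->
  rcomp (rcomp f g) f = f -> rcomp (rcomp g f) g = g -> g = rinv f.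
Proof.
move=> [f1 f2] [g1 g2] fgf gfg; apply/setP => -[y x]; rewrite rinvE.
apply/idP/idP => yx.
  move: (yx); rewrite -gfg => /rcompP[q [/rcompP[p [yp pq]] qx]].
  rewrite (g1 _ _ _ yp yx) in pq.
  by rewrite -(g2 _ _ _ qx yx).
move: (yx); rewrite -fgf => /rcompP[q [/rcompP[p [xp pq]] qy]].
rewrite (f1 _ _ _ xp yx) in pq.
by rewrite -(f2 _ _ _ qy yx).
Qed.

Lemma card_rcomp f g : pbij f -> pbij g -> #|rcomp f g| <= #|g|.
Proof.
move=> pf pg; have [_ inj2] := pbij_rcomp pf pg.
have -> : #|rcomp f g| = #|[set p.2 | p in rcomp f g]|.
  apply/esym/card_in_imset => -[x z] [y z'] /= xz yz' /= zz'.
  by rewrite -zz' in yz' *; rewrite (inj2 _ _ _ xz yz').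
apply: leq_trans (leq_imset_card (fun p : V * V => p.2) g).
apply: subset_leq_card; apply/subsetP => _ /imsetP[[x z] /rcompP[y [_ yz]] ->].
by apply/imsetP; exists (y, z).
Qed.

Lemma partial_id_idem d : partial_id d -> rcomp d d = d.
Proof.
move/partial_idP => dd; apply/setP => -[x y]; apply/idP/idP.
  by case/rcompP => z [/dd ->].
by move=> xy; apply/rcompP; exists x; rewrite {2}(dd _ _ xy).
Qed.

Lemma partial_id_rcomp_rinv f : pbij f -> partial_id (rcomp f (rinv f)).
Proof.
move=> [_ f2]; apply/partial_idP => x y /rcompP[p [xp]]; rewrite rinvE.
exact: f2 xp.
Qed.

Lemma partial_id_rinv_rcomp f : pbij f -> partial_id (rcomp (rinv f) f).
Proof.
by move=> pf; rewrite -{2}(rinvK f); apply/partial_id_rcomp_rinv/pbij_rinv.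
Qed.

Lemma partial_id_rcomp d d' : partial_id d -> partial_id d' -> partial_id (rcomp d d').
Proof.
move=> /partial_idP dd /partial_idP dd'.
by apply/partial_idP => x y /rcompP[z [/dd -> /dd']].
Qed.

Lemma partial_id_conj f d : pbij f -> partial_id d ->
  partial_id (rcomp (rcomp f d) (rinv f)).
Proof.
move=> [_ f2] /partial_idP dd; apply/partial_idP => x y.
case/rcompP => z [/rcompP[z' [xz' /dd <-]]]; rewrite rinvE; exact: f2 xz'.
Qed.

Lemma rcomp_partial_id_sub d g : partial_id d -> rcomp d g \subset g.
Proof. by move/partial_idP => dd; apply/subsetP => -[x y] /rcompP[z [/dd ->]]. Qed.

Lemma rcomp_partial_id_subl d d' : partial_id d' -> rcomp d d' \subset d.
Proof.
by move/partial_idP => dd'; apply/subsetP => -[x y] /rcompP[z [xz /dd' <-]].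
Qed.

Lemma rcomp_rinv_sub f g : pbij g -> f \subset g -> rcomp (rcomp f (rinv f)) g = f.
Proof.
move=> [g1 g2] /subsetP fg; apply/setP => -[x y]; apply/idP/idP.
  case/rcompP => q [/rcompP[p [xp]]]; rewrite rinvE => qp qy.
  rewrite -(g2 _ _ _ (fg _ xp) (fg _ qp)) in qy.
  by rewrite -(g1 _ _ _ (fg _ xp) qy).
move=> xy; apply/rcompP; exists x; split; last exact: fg.
by apply/rcompP; exists y; rewrite rinvE.
Qed.

Lemma card_partial_id_dom d g : partial_id d ->
  (forall x, (x, x) \in d -> exists y, (x, y) \in g) -> #|d| <= #|g|.
Proof.
move=> /partial_idP dd dg.
have -> : #|d| = #|[set p.1 | p in d]|.
  by apply/esym/card_in_imset => -[x y] [x' y'] /dd /= <- /dd /= <- /= ->.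
apply: leq_trans (leq_imset_card (fun p : V * V => p.1) g).
apply: subset_leq_card; apply/subsetP => _ /imsetP[[x y] xy ->].
have [z xz] : exists z, (x, z) \in g by apply: dg; rewrite {2}(dd _ _ xy).
by apply/imsetP; exists (x, z).
Qed.

End PartialBijections.
Record pbij_embedding (T V : finType) (S : {set T}) (mul : T -> T -> T)
    (D : {set V}) (r : T -> {set V * V}) (atom : V -> V -> T) : Prop := {
  emb_mul_closed a b : a \in S -> b \in S -> mul a b \in S;
  emb_morph a b : a \in S -> b \in S -> r (mul a b) = rcomp (r a) (r b);
  emb_inj a b : a \in S -> b \in S -> r a = r b -> a = b;
  emb_pbij a : a \in S -> pbij (r a);
  emb_rinv a : a \in S -> exists2 t, t \in S & r t = rinv (r a);
  emb_sub a : a \in S -> r a \subset setX D D;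
  emb_atom_in A B : A \in D -> B \in D -> atom A B \in S;
  emb_atom A B : A \in D -> B \in D -> r (atom A B) = [set (A, B)]
}.

Section Embedding.
Variables (T V : finType) (S : {set T}) (mul : T -> T -> T) (D : {set V}).
Variables (r : T -> {set V * V}) (atom : V -> V -> T).
Hypothesis emb : pbij_embedding S mul D r atom.

Local Notation inv := (sinv S mul).
Let mulS := emb_mul_closed emb.
Let rM := emb_morph emb.
Let rpbij := emb_pbij emb.
Let rinj := emb_inj emb.
Let atomS := emb_atom_in emb.
Let r_atom := emb_atom emb.

Lemma sinv_spec a : a \in S -> inv a \in S /\ r (inv a) = rinv (r a).
Proof.
move=> aS; rewrite /sinv; case: pickP => [t /and3P[tS /eqP ata /eqP tat] | none].
  split => //; apply: pbij_inverse_uniq (rpbij aS) (rpbij tS) _ _.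
    by rewrite -!rM ?mulS // ata.
  by rewrite -!rM ?mulS // tat.
have [t tS rt] := emb_rinv emb aS; have pa := rpbij aS.
move: (none t); rewrite tS /=.
have -> : mul (mul a t) a = a.
  by apply: rinj; rewrite ?mulS // !rM ?mulS // rt rcomp_rinvK.
have -> : mul (mul t a) t = t.
  apply: rinj; rewrite ?mulS // !rM ?mulS // rt.
  by rewrite -{2}(rinvK (r a)) rcomp_rinvK //; apply: pbij_rinv.
by rewrite !eqxx.
Qed.

Lemma sinv_in a : a \in S -> inv a \in S.
Proof. by case/sinv_spec. Qed.

Lemma r_sinv a : a \in S -> r (inv a) = rinv (r a).
Proof. by case/sinv_spec. Qed.

Lemma r_mul_sinv a : a \in S -> r (mul a (inv a)) = rcomp (r a) (rinv (r a)).
Proof. by move=> aS; rewrite rM ?sinv_in ?r_sinv. Qed.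

Lemma r_sinv_mul a : a \in S -> r (mul (inv a) a) = rcomp (rinv (r a)) (r a).
Proof. by move=> aS; rewrite rM ?sinv_in ?r_sinv. Qed.

Lemma idem_partial_id e : idem S mul e -> partial_id (r e).
Proof.
case/andP => eS /eqP ee; have [f1 f2] := rpbij eS.
apply/partial_idP => x y xy; move: (xy); rewrite -{1}ee rM // => /rcompP[z [xz zy]].
by rewrite (f1 _ _ _ xz xy) in zy; apply: f2 xy zy.
Qed.

Lemma nleqE s t : s \in S -> t \in S -> nleq S mul s t = (r s \subset r t).
Proof.
move=> sS tS; apply/exists_inP/idP.
  case=> e eS /andP[ie /eqP ->].
  by rewrite rM // rcomp_partial_id_sub // idem_partial_id.
move=> st; set e := mul s (inv s); have pS := rpbij sS.
have eS : e \in S by rewrite mulS ?sinv_in.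
have re : r e = rcomp (r s) (rinv (r s)) by apply: r_mul_sinv.
exists e => //; apply/andP; split.
  rewrite /idem eS; apply/eqP/rinj => //; first exact: mulS.
  by rewrite rM // re partial_id_idem // partial_id_rcomp_rinv.
apply/eqP/rinj => //; first exact: mulS.
by rewrite rM // re rcomp_rinv_sub //; apply: rpbij.
Qed.

Lemma upcloseE (H : {set T}) s : H \subset S ->
  (s \in upclose S mul H) = (s \in S) && [exists h in H, r h \subset r s].
Proof.
move=> /subsetP HS; rewrite inE; case sS: (s \in S) => //=.
by apply/exists_inP/exists_inP => -[h hH hs]; exists h; rewrite // ?(nleqE (HS _ hH) sS) in hs *.
Qed.

Lemma r_sub_D a x y : a \in S -> (x, y) \in r a -> x \in D /\ y \in D.
Proof. by move=> aS /(subsetP (emb_sub emb aS)) /setXP. Qed.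

Lemma mulr_sub (K : {set T}) y : K \subset S -> y \in S ->
  [set mul k y | k in K] \subset S.
Proof. by move=> /subsetP KS yS; apply/subsetP => _ /imsetP[k /KS kS ->]; apply: mulS. Qed.

Lemma mem_rcoset (K : {set T}) k y : K \subset S -> k \in K -> y \in S ->
  mul k y \in rcoset S mul K y.
Proof.
move=> KS kK yS; have kS := subsetP KS _ kK.
rewrite /rcoset upcloseE ?mulr_sub // mulS //=.
by apply/exists_inP; exists (mul k y); [apply/imsetP; exists k | apply: subxx].
Qed.

Variable x0 : V.
Hypothesis x0D : x0 \in D.

Definition stab := [set t in S | (x0, x0) \in r t].
Definition stab_coset B := [set w in S | (x0, B) \in r w].

Lemma stab_sub : stab \subset S.
Proof. by apply/subsetP => t /setIdP[]. Qed.

Lemma atom_in_stab : atom x0 x0 \in stab.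
Proof. by rewrite inE atomS // r_atom // set11. Qed.

Lemma atom_in_stab_coset B : B \in D -> atom x0 B \in stab_coset B.
Proof. by move=> BD; rewrite inE atomS // r_atom // set11. Qed.

Lemma closed_stab : closed_inv_subsemigroup S mul stab.
Proof.
apply/andP; split.
  apply/and4P; split; first exact: stab_sub.
  - by apply/set0Pn; exists (atom x0 x0); apply: atom_in_stab.
  - apply/forall_inP => h /setIdP[hS hx0]; apply/forall_inP => k /setIdP[kS kx0].
    by rewrite inE mulS // rM //; apply/rcompP; exists x0.
  - by apply/forall_inP => h /setIdP[hS hx0]; rewrite inE sinv_in // r_sinv // rinvE.
apply/eqP/setP => s; rewrite upcloseE ?stab_sub //; apply/idP/idP.
  case/andP => sS /exists_inP[h /setIdP[hS hx0] /subsetP hs].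
  by rewrite inE sS hs.
by move=> sH; rewrite (subsetP stab_sub) //=; apply/exists_inP; exists s.
Qed.

Lemma r_atom_mul y : y \in S -> r (mul (atom x0 x0) y) = [set p in r y | p.1 == x0].
Proof.
move=> yS; rewrite rM ?atomS // r_atom //; apply/setP => -[x z].
rewrite inE /=; apply/rcompP/andP => [[u []]|[xz /eqP xx0]].
  by rewrite inE => /eqP[-> ->] ->.
by rewrite xx0 in xz *; exists x0; rewrite set11.
Qed.

Lemma rcoset_stab y B : y \in S -> (x0, B) \in r y -> rcoset S mul stab y = stab_coset B.
Proof.
move=> yS yB; apply/setP => w; rewrite upcloseE ?mulr_sub ?stab_sub // inE.
case wS: (w \in S) => //=; apply/idP/idP.
  case/exists_inP => _ /imsetP[h /setIdP[hS hx0] ->] /subsetP; apply.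
  by rewrite rM //; apply/rcompP; exists x0.
move=> wB; apply/exists_inP; exists (mul (atom x0 x0) y); first by rewrite imset_f ?atom_in_stab.
apply/subsetP => -[x z]; rewrite r_atom_mul // => /setIdP[xz /= /eqP xx0].
by rewrite xx0 in xz *; have [f1 _] := rpbij yS; rewrite (f1 _ _ _ xz yB).
Qed.

Lemma stab_domain s : s \in S -> mul s (inv s) \in stab ->
  exists2 B, B \in D & (x0, B) \in r s.
Proof.
move=> sS /setIdP[_]; rewrite r_mul_sinv // => /rcompP[B [sB _]].
by exists B => //; case: (r_sub_D sS sB).
Qed.

Lemma cosets_stab_in y : y \in S -> rcoset S mul stab y \in cosets S mul stab ->
  exists2 B, B \in D & (x0, B) \in r y.
Proof.
move=> yS /imsetP[s /setIdP[sS sH] E]; have [B BD sB] := stab_domain sS sH.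
have : mul (atom x0 x0) y \in stab_coset B.
  by rewrite -(rcoset_stab sS sB) -E mem_rcoset ?stab_sub ?atom_in_stab.
by case/setIdP => _; rewrite r_atom_mul // => /setIdP[yB _]; exists B.
Qed.

Lemma stab_coset_inj B B' : B \in D -> stab_coset B = stab_coset B' -> B = B'.
Proof.
move=> BD E; move: (atom_in_stab_coset BD); rewrite E => /setIdP[_].
by rewrite r_atom // inE => /eqP[].
Qed.

Lemma cosets_stab : cosets S mul stab = [set stab_coset B | B in D].
Proof.
apply/setP => C; apply/imsetP/imsetP => [[s /setIdP[sS sH] ->] | [B BD ->]].
  by have [B BD sB] := stab_domain sS sH; exists B; rewrite ?(rcoset_stab sS sB).
have aS := atomS x0D BD; have aB := atom_in_stab_coset BD.
exists (atom x0 B); last by case/setIdP: aB => _ aB; rewrite (rcoset_stab aS aB).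
rewrite inE aS inE mulS ?sinv_in //= r_mul_sinv // r_atom //.
by apply/rcompP; exists B; rewrite rinvE set11.
Qed.

Lemma card_cosets_stab : #|cosets S mul stab| = #|D|.
Proof. by rewrite cosets_stab card_in_imset // => B B' BD _; apply: stab_coset_inj. Qed.

Lemma phi_stab_sub s t : s \in S -> t \in S -> phi S mul stab s = phi S mul stab t ->
  r s \subset r t.
Proof.
move=> sS tS E; apply/subsetP => -[B C] BC; have [BD CD] := r_sub_D sS BC.
have aS := atomS x0D BD; have aB : (x0, B) \in r (atom x0 B) by rewrite r_atom // set11.
have asC : (x0, C) \in r (mul (atom x0 B) s) by rewrite rM //; apply/rcompP; exists B.
have : (stab_coset B, stab_coset C) \in phi S mul stab s.
  rewrite inE; apply/exists_inP; exists (atom x0 B) => //.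
  by rewrite (rcoset_stab aS aB) (rcoset_stab (mulS aS sS) asC) eqxx cosets_stab !imset_f.
rewrite E inE => /exists_inP[x xS /and3P[/eqP[E1 E2] c1 c2]].
have [B' _ xB'] := cosets_stab_in xS c1.
rewrite (rcoset_stab xS xB') in E1; rewrite -(stab_coset_inj BD E1) in xB'.
have [C' _ xtC'] := cosets_stab_in (mulS xS tS) c2.
rewrite (rcoset_stab (mulS xS tS) xtC') in E2; rewrite -(stab_coset_inj CD E2) in xtC'.
move: xtC'; rewrite rM // => /rcompP[y [xy yC]].
by have [f1 _] := rpbij xS; rewrite (f1 _ _ _ xB' xy).
Qed.

Lemma faithful_stab : faithful S mul stab.
Proof.
move=> s t sS tS E; apply: rinj => //; apply/eqP.
by rewrite eqEsubset !phi_stab_sub.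
Qed.

Variable x1 : V.
Hypotheses (x1D : x1 \in D) (x01 : x0 != x1).

Lemma atom_neq : atom x0 x0 != atom x0 x1.
Proof.
apply/negP => /eqP /(congr1 r); rewrite !r_atom // => /set1_inj [] /eqP.
by rewrite (negbTE x01).
Qed.

Section ClosedInvSubsemigroup.
Variable K : {set T}.
Hypothesis Kcl : closed_inv_subsemigroup S mul K.

Lemma closed_sub : K \subset S.
Proof. by case/andP: Kcl => /and4P[]. Qed.

Lemma closed_mul h k : h \in K -> k \in K -> mul h k \in K.
Proof.
by case/andP: Kcl => /and4P[_ _ /forall_inP KK _] _ hK kK; apply: (forall_inP (KK h hK)).
Qed.

Lemma closed_sinv k : k \in K -> inv k \in K.
Proof. by case/andP: Kcl => /and4P[_ _ _ /forall_inP KV] _ /KV. Qed.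

Lemma closed_up k s : k \in K -> s \in S -> r k \subset r s -> s \in K.
Proof.
move=> kK sS ks; case/andP: Kcl => _ /eqP <-.
by rewrite upcloseE ?closed_sub // sS; apply/exists_inP; exists k.
Qed.

Let KS := subsetP closed_sub.

Lemma least_idem : exists2 e, (e \in K) && partial_id (r e) &
  forall f, f \in K -> partial_id (r f) -> r e \subset r f.
Proof.
have [k kK] : exists k, k \in K by case/andP: Kcl => /and4P[_ /set0Pn].
have kkK : (mul k (inv k) \in K) && partial_id (r (mul k (inv k))).
  rewrite closed_mul ?closed_sinv //= r_mul_sinv ?KS //.
  exact/partial_id_rcomp_rinv/rpbij/KS.
case: (@arg_minnP _ _ (fun e => (e \in K) && partial_id (r e)) (fun e => #|r e|) kkK).
move=> e /andP[eK eid] emin.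
exists e => [|f fK fid]; first by rewrite eK.
have efK : mul e f \in K by rewrite closed_mul.
have ref : r (mul e f) = rcomp (r e) (r f) by rewrite rM ?KS.
have := emin _ (introT andP (conj efK _)); rewrite ref => /(_ (partial_id_rcomp eid fid)) le.
suff -> : r e = rcomp (r e) (r f) by apply: rcomp_partial_id_sub.
by apply/eqP; rewrite eq_sym eqEcard rcomp_partial_id_subl.
Qed.

Variable e : T.
Hypotheses (eK : e \in K) (eid : partial_id (r e)).
Hypothesis emin : forall f, f \in K -> partial_id (r f) -> r e \subset r f.

Let eS := KS eK.

(* If [e] acts as zero, then [K] is all of [S] and there is a single coset. *)
Lemma phi_rank0 : r e = set0 -> forall s, s \in S -> phi S mul K s = [set (S, S)].
Proof.
move=> e0; have allK s : s \in S -> s \in K.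
  by move=> sS; apply: closed_up eK sS _; rewrite e0 sub0set.
have rcosetS y : y \in S -> rcoset S mul K y = S.
  move=> yS; apply/setP => w; rewrite upcloseE ?mulr_sub ?closed_sub //.
  case wS : (w \in S) => //=; apply/exists_inP; exists (mul e y).
    by apply/imsetP; exists e.
  by rewrite rM // e0; apply/subsetP => -[x z] /rcompP[u []]; rewrite inE.
have aS := atomS x0D x0D.
have SC : S \in cosets S mul K.
  by apply/imsetP; exists (atom x0 x0); rewrite ?rcosetS // inE aS allK ?mulS ?sinv_in.
move=> s sS; apply/setP => p; rewrite inE [RHS]inE; apply/exists_inP/eqP.
  by case=> x xS /and3P[/eqP -> _ _]; rewrite !rcosetS ?mulS.
by move=> ->; exists (atom x0 x0) => //; rewrite !rcosetS ?mulS // eqxx SC.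
Qed.

(* If [phi_K s] relates two cosets, some [k y <= e x s] with [k \in K] and
   [y y^-1 \in K]; the idempotent [k y y^-1 k^-1] of [K] lies above [e], so
   [rank e <= rank (k y) <= rank s]. *)
Lemma phi_small_rank s : s \in S -> #|r s| < #|r e| -> phi S mul K s = set0.
Proof.
move=> sS small; apply/setP => p; rewrite inE in_set0; apply/negbTE/negP.
case/exists_inP => x xS /and3P[_ _ /imsetP[y /setIdP[yS yK] E]].
have xsS : mul x s \in S by rewrite mulS.
have := mem_rcoset closed_sub eK xsS; rewrite E upcloseE ?mulr_sub ?closed_sub //.
case/andP => _ /exists_inP[_ /imsetP[k kK ->] kyexs]; have kS := KS kK.
set f := mul (mul k (mul y (inv y))) (inv k).
have fK : f \in K := closed_mul (closed_mul kK yK) (closed_sinv kK).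
have rf : r f = rcomp (rcomp (r k) (rcomp (r y) (rinv (r y)))) (rinv (r k)).
  by rewrite !rM ?mulS ?sinv_in // !r_sinv.
have ef : r e \subset r f.
  apply: emin => //; rewrite rf.
  exact: partial_id_conj (rpbij kS) (partial_id_rcomp_rinv (rpbij yS)).
have le_e_ky : #|r e| <= #|r (mul k y)|.
  apply: card_partial_id_dom => // a /(subsetP ef); rewrite rf.
  case/rcompP => c [/rcompP[c1 [ac1 /rcompP[d [c1d _]]]] _].
  by exists d; rewrite rM //; apply/rcompP; exists c1.
have le_exs_s : #|r (mul e (mul x s))| <= #|r s|.
  rewrite !rM ?mulS //; apply: leq_trans (card_rcomp (rpbij eS) _) _.
    by apply: pbij_rcomp; apply: rpbij.
  exact: card_rcomp (rpbij xS) (rpbij sS).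
have := leq_trans le_e_ky (leq_trans (subset_leq_card kyexs) le_exs_s).
by rewrite leqNgt small.
Qed.

Lemma rank1_rep_equiv A : r e = [set (A, A)] -> rep_equiv S mul stab K.
Proof.
move=> reA; have AA : (A, A) \in r e by rewrite reA set11.
have [AD _] := r_sub_D eS AA.
have aS := atomS x0D AD; have ra := r_atom x0D AD.
apply/exists_inP; exists (atom x0 A) => //.
apply/andP; split; apply/subsetP => _ /imsetP[h hH ->].
  have [hS hx0] := setIdP hH.
  apply: (closed_up eK); first by rewrite !mulS ?sinv_in.
  rewrite !rM ?mulS ?sinv_in // r_sinv // ra reA sub1set.
  apply/rcompP; exists x0; split; last by rewrite set11.
  by apply/rcompP; exists x0; rewrite rinvE set11.
have hS := KS hH; have ehK : mul e h \in K by rewrite closed_mul.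
(* [e <= (e h)^-1 (e h)] by leastness, and [r e = {(A, A)}] forces [(A, A) \in r h]. *)
have Ah : (A, A) \in r h.
  have ehS := KS ehK.
  have fid : partial_id (r (mul (inv (mul e h)) (mul e h))).
    by rewrite r_sinv_mul //; apply/partial_id_rinv_rcomp/rpbij.
  have := subsetP (emin (closed_mul (closed_sinv ehK) ehK) fid) _ AA.
  rewrite r_sinv_mul // => /rcompP[c []]; rewrite rinvE rM // => /rcompP[d []].
  by rewrite reA inE => /eqP[-> ->].
rewrite inE !mulS ?sinv_in // !rM ?mulS ?sinv_in // r_sinv // ra.
apply/rcompP; exists A; split; last by rewrite rinvE set11.
by apply/rcompP; exists A; rewrite set11.
Qed.

End ClosedInvSubsemigroup.

Lemma faithful_rep_equiv_stab K : closed_inv_subsemigroup S mul K ->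
  faithful S mul K -> rep_equiv S mul stab K.
Proof.
move=> Kcl fK; have [e /andP[eK eid] emin] := least_idem Kcl.
have [aS bS] := (atomS x0D x0D, atomS x0D x1D).
have phi_neq : phi S mul K (atom x0 x0) <> phi S mul K (atom x0 x1).
  by move/(fK _ _ aS bS)/eqP; apply/negP/atom_neq.
have [/eqP | e_gt0] := posnP #|r e|.
  by rewrite cards_eq0 => /eqP /(phi_rank0 Kcl eK) phiS; case: phi_neq; rewrite !phiS.
have [e_le1 | e_gt1] := leqP #|r e| 1.
  have /cards1P[[A A'] reA] : #|r e| == 1 by rewrite eqn_leq e_le1.
  have AA' : A = A' by apply: (partial_idP _ eid); rewrite reA set11.
  by rewrite -AA' in reA; apply: rank1_rep_equiv reA.
by case: phi_neq; rewrite !(phi_small_rank Kcl eK eid emin) ?r_atom ?cards1.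
Qed.

Theorem stab_unique_faithful_rep : exists H : {set T},
  [/\ closed_inv_subsemigroup S mul H, faithful S mul H, #|cosets S mul H| = #|D| &
      forall K, closed_inv_subsemigroup S mul K -> faithful S mul K ->
        rep_equiv S mul H K].
Proof.
exists stab; split; [exact: closed_stab | exact: faithful_stab |
  exact: card_cosets_stab | exact: faithful_rep_equiv_stab].
Qed.

End Embedding.

Section Blocks.
Variable n : nat.
Implicit Types (A D : {set 'I_n}) (B : {set XX n}) (a : PT n).

Lemma mkblock_inl A D i : (inl i \in mkblock A D) = (i \in A).
Proof. by rewrite inE. Qed.

Lemma mkblock_inr A D j : (inr j \in mkblock A D) = (j \in D).
Proof. by rewrite inE. Qed.

Lemma in_lpart B i : (i \in lpart B) = (inl i \in B).
Proof. by rewrite inE. Qed.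

Lemma in_rpart B j : (j \in rpart B) = (inr j \in B).
Proof. by rewrite inE. Qed.

Lemma mkblockK B : mkblock (lpart B) (rpart B) = B.
Proof. by apply/setP => -[i|j]; rewrite !inE. Qed.

Lemma lpart_mkblock A D : lpart (mkblock A D) = A.
Proof. by apply/setP => i; rewrite in_lpart mkblock_inl. Qed.

Lemma rpart_mkblock A D : rpart (mkblock A D) = D.
Proof. by apply/setP => j; rewrite in_rpart mkblock_inr. Qed.

Lemma mkblock_inj A D A' D' : mkblock A D = mkblock A' D' -> A = A' /\ D = D'.
Proof.
move=> E; split; [move/(congr1 (@lpart n)): E | move/(congr1 (@rpart n)): E].
  by rewrite !lpart_mkblock.
by rewrite !rpart_mkblock.
Qed.

Lemma gline_parts B : gline B = (lpart B != set0) && (rpart B != set0).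
Proof.
by congr andb; apply/existsP/set0Pn => -[i iB]; exists i; rewrite ?in_lpart ?in_rpart in iB *.
Qed.

Lemma gline_mkblock A D : gline (mkblock A D) = (A != set0) && (D != set0).
Proof. by rewrite gline_parts lpart_mkblock rpart_mkblock. Qed.

Lemma gline_set1 (x : XX n) : gline [set x] = false.
Proof. by apply/negbTE/negP => /andP[/existsP[i]] /[!inE] /eqP <- /existsP[j]; rewrite inE. Qed.

Lemma valid_intro a :
  partition a setT -> (forall B, B \in a -> (#|B| == 1) || gline B) -> valid a.
Proof. by move=> Pa Ba; rewrite /valid Pa; apply/forall_inP. Qed.

Section Valid.
Variable a : PT n.
Hypothesis va : valid a.

Lemma valid_partition : partition a setT.
Proof. by case/andP: va. Qed.

Lemma valid_cover x : x \in cover a.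
Proof. by rewrite (cover_partition valid_partition) inE. Qed.

Lemma pblock_valid x : pblock a x \in a.
Proof. exact: pblock_mem (valid_cover x). Qed.

Lemma mem_pblock_valid x : x \in pblock a x.
Proof. by rewrite mem_pblock valid_cover. Qed.

Lemma pblock_validE B x : B \in a -> x \in B -> pblock a x = B.
Proof. exact/def_pblock/partition_trivIset/valid_partition. Qed.

Lemma valid_block_uniq B B' x : B \in a -> B' \in a -> x \in B -> x \in B' -> B = B'.
Proof. by move=> Ba B'a xB xB'; rewrite -(pblock_validE Ba xB) (pblock_validE B'a xB'). Qed.

Lemma valid_block_kind B : B \in a -> (#|B| == 1) || gline B.
Proof. by case/andP: va => _ /forall_inP; apply. Qed.

Lemma pblock_kind x : pblock a x = [set x] \/ gline (pblock a x).
Proof.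
case/orP: (valid_block_kind (pblock_valid x)) => [/cards1P[y E]|]; last by right.
by left; move: (mem_pblock_valid x); rewrite E inE => /eqP ->.
Qed.

Lemma pblock_set1 x : [set x] \in a -> pblock a x = [set x].
Proof. by move=> xa; apply: pblock_validE xa _; rewrite inE. Qed.

End Valid.

(* A point [[set x]] of one partition is a point of the other: otherwise the
   line through [x] would be a block of both. *)
Lemma valid_eq_glines a a' : valid a -> valid a' ->
  (forall B, B \in a -> gline B -> B \in a') ->
  (forall B, B \in a' -> gline B -> B \in a) -> a = a'.
Proof.
have sub c c' : valid c -> valid c' -> (forall B, B \in c -> gline B -> B \in c') ->
    (forall B, B \in c' -> gline B -> B \in c) -> c \subset c'.
  move=> vc vc' cc' c'c; apply/subsetP => B Bc.
  case/orP: (valid_block_kind vc Bc) => [/cards1P[x Bx]|]; last exact: cc'.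
  case: (pblock_kind vc' x) => [E | g]; first by rewrite Bx -E pblock_valid.
  have xB : x \in B by rewrite Bx set11.
  have E := valid_block_uniq vc Bc (c'c _ (pblock_valid vc' x) g) xB (mem_pblock_valid vc' x).
  by move: g; rewrite -E Bx gline_set1.
by move=> va va' H1 H2; apply/eqP; rewrite eqEsubset !sub.
Qed.

End Blocks.

Lemma trivIset_uniq (X : finType) (P : {set {set X}}) :
  (forall B B' x, B \in P -> B' \in P -> x \in B -> x \in B' -> B = B') -> trivIset P.
Proof.
move=> uniqP; apply/trivIsetP => B B' BP B'P; apply: contraR.
by case/pred0Pn => x /andP[xB xB']; rewrite (uniqP _ _ _ BP B'P xB xB') eqxx.
Qed.

Section Transpose.
Variable n : nat.
Implicit Types (A D : {set 'I_n}) (B : {set XX n}) (a : PT n).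

Definition swap_side (x : XX n) : XX n :=
  match x with inl i => inr i | inr i => inl i end.

Definition ptranspose a : PT n := [set swap_side @: (B : {set XX n}) | B in a].

Lemma swap_sideK : involutive swap_side.
Proof. by case. Qed.

Lemma mem_swap_set B x : (x \in swap_side @: B) = (swap_side x \in B).
Proof. by rewrite -[in LHS](swap_sideK x) (mem_imset _ _ (can_inj swap_sideK)). Qed.

Lemma swap_setK B : swap_side @: (swap_side @: B) = B.
Proof. by apply/setP => x; rewrite !mem_swap_set swap_sideK. Qed.

Lemma gline_swap B : gline (swap_side @: B) = gline B.
Proof.
by rewrite /gline andbC; congr andb; apply: eq_existsb => i; rewrite mem_swap_set.
Qed.

Lemma mkblock_swap A D : swap_side @: mkblock A D = mkblock D A.
Proof. by apply/setP => -[i|j]; rewrite mem_swap_set !inE. Qed.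

Lemma mem_ptranspose a B : (B \in ptranspose a) = (swap_side @: B \in a).
Proof.
apply/imsetP/idP => [[B' B'a ->] | Ba]; first by rewrite swap_setK.
by exists (swap_side @: B); rewrite ?swap_setK.
Qed.

Lemma valid_ptranspose a : valid a -> valid (ptranspose a).
Proof.
move=> va; apply: valid_intro.
  have := imset_partition a setT (can_inj swap_sideK).
  rewrite (_ : swap_side @: setT = setT) => [-> |]; first exact: valid_partition.
  by apply/setP => x; rewrite mem_swap_set !inE.
move=> B; rewrite mem_ptranspose => /(valid_block_kind va).
by rewrite card_imset ?gline_swap //; apply: can_inj swap_sideK.
Qed.

Lemma pblock_ptranspose a x : valid a ->
  pblock (ptranspose a) x = swap_side @: pblock a (swap_side x).
Proof.
move=> va; apply: pblock_validE; first exact: valid_ptranspose.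
  by rewrite mem_ptranspose swap_setK pblock_valid.
by rewrite mem_swap_set mem_pblock_valid.
Qed.

End Transpose.
Arguments swap_side {n} x.

Section AddPoints.
Variable n : nat.
Implicit Types (A D : {set 'I_n}) (B : {set XX n}) (Ls : {set {set XX n}}).

Definition add_points Ls : PT n := Ls :|: [set [set x] | x in ~: cover Ls].

Definition single_line A D : PT n := add_points [set mkblock A D].

Lemma add_pointsP Ls B : B \in add_points Ls ->
  B \in Ls \/ exists2 x, x \notin cover Ls & B = [set x].
Proof.
case/setUP => [|/imsetP[x]]; first by left.
by rewrite in_setC => xLs ->; right; exists x.
Qed.

Lemma add_points_gline Ls B : B \in add_points Ls -> gline B -> B \in Ls.
Proof. by case/add_pointsP => // -[x _ ->]; rewrite gline_set1. Qed.

Lemma add_points_set1 Ls x : x \notin cover Ls -> [set x] \in add_points Ls.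
Proof. by move=> xLs; rewrite inE imset_f ?orbT // in_setC. Qed.

Lemma valid_add_points Ls : trivIset Ls -> {in Ls, forall B, gline B} ->
  valid (add_points Ls).
Proof.
move=> trivLs glLs; apply: valid_intro; last first.
  by move=> B /add_pointsP[/glLs -> | [x _ ->]]; rewrite ?cards1 ?orbT.
apply/and3P; split.
- apply/eqP/setP => x; rewrite inE; apply/bigcupP.
  case xLs: (x \in cover Ls); last by exists [set x]; rewrite ?set11 ?add_points_set1 ?xLs.
  by case/bigcupP: xLs => B BLs xB; exists B; rewrite // inE BLs.
- apply: trivIset_uniq => B B' x /add_pointsP[BLs | [y yLs ->]].
  + case/add_pointsP => [B'Ls | [z zLs ->]] xB.
      by move=> xB'; rewrite -(def_pblock trivLs BLs xB) (def_pblock trivLs B'Ls xB').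
    by rewrite inE => /eqP xz; rewrite xz in xB; case/negP: zLs; apply/bigcupP; exists B.
  + case/add_pointsP => [B'Ls | [z _ ->]]; rewrite !inE => /eqP ->; last by move/eqP ->.
    by move=> yB'; case/negP: yLs; apply/bigcupP; exists B'.
- apply/negP => /add_pointsP[/glLs/andP[/existsP[i]] | [x _ /setP/(_ x)]].
    by rewrite inE.
  by rewrite !inE eqxx.
Qed.

Lemma valid_single_line A D : A != set0 -> D != set0 -> valid (single_line A D).
Proof.
move=> A0 D0; apply: valid_add_points; first exact: trivIset1.
by move=> B /set1P ->; rewrite gline_mkblock A0 D0.
Qed.

Lemma pblock_single_line A D x : A != set0 -> D != set0 ->
  pblock (single_line A D) x = if x \in mkblock A D then mkblock A D else [set x].
Proof.
move=> A0 D0; have vL := valid_single_line A0 D0.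
case: ifP => xM; apply: pblock_validE => //; rewrite ?set11 //.
  by rewrite !inE eqxx.
by apply: add_points_set1; rewrite cover1 xM.
Qed.

End AddPoints.

Definition nonempty_subsets n : {set {set 'I_n}} := [set A | A != set0].

Section Circ.
Variable n : nat.
Implicit Types (A D : {set 'I_n}) (a b : PT n) (Ls : {set {set XX n}}).

Definition line_pairs Ls : {set {set 'I_n} * {set 'I_n}} :=
  [set p | [&& mkblock p.1 p.2 \in Ls, p.1 != set0 & p.2 != set0]].

Lemma line_pairsE Ls A D :
  ((A, D) \in line_pairs Ls) = [&& mkblock A D \in Ls, A != set0 & D != set0].
Proof. by rewrite inE. Qed.

Lemma line_pairs_sub Ls : line_pairs Ls \subset setX (nonempty_subsets n) (nonempty_subsets n).
Proof. by apply/subsetP => -[A D]; rewrite line_pairsE in_setX !inE => /and3P[_ -> ->]. Qed.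

Lemma line_pairs_add_points Ls : line_pairs (add_points Ls) = line_pairs Ls.
Proof.
apply/setP => -[A D]; rewrite !line_pairsE; apply/and3P/and3P => -[M A0 D0]; split => //.
  by apply: add_points_gline M _; rewrite gline_mkblock A0 D0.
by rewrite inE M.
Qed.

Lemma line_pairs_single_line A D : A != set0 -> D != set0 ->
  line_pairs (single_line A D) = [set (A, D)].
Proof.
move=> A0 D0; apply/setP => -[A' D'].
rewrite line_pairs_add_points line_pairsE !inE xpair_eqE.
apply/and3P/andP => [[/eqP/mkblock_inj[-> ->] _ _] | [/eqP-> /eqP->]]; first by [].
by rewrite eqxx.
Qed.

Section ValidLines.
Variable a : PT n.
Hypothesis va : valid a.

Lemma line_pairs_uniq A1 D1 A2 D2 x : (A1, D1) \in line_pairs a -> (A2, D2) \in line_pairs a ->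
  x \in mkblock A1 D1 -> x \in mkblock A2 D2 -> A1 = A2 /\ D1 = D2.
Proof.
rewrite !line_pairsE => /andP[M1 _] /andP[M2 _] x1 x2.
exact/mkblock_inj/(valid_block_uniq va M1 M2 x1 x2).
Qed.

Lemma line_pairs_pbij : pbij (line_pairs a).
Proof.
split=> [A D D' AD AD' | A A' D AD A'D].
  move: (AD); rewrite line_pairsE => /and3P[_ /set0Pn[i iA] _].
  by case: (line_pairs_uniq AD AD' (x := inl i)); rewrite ?mkblock_inl.
move: (AD); rewrite line_pairsE => /and3P[_ _ /set0Pn[j jD]].
by case: (line_pairs_uniq AD A'D (x := inr j)); rewrite ?mkblock_inr.
Qed.

Lemma line_pairs_ptranspose : line_pairs (ptranspose a) = rinv (line_pairs a).
Proof.
apply/setP => -[A D]; rewrite rinvE !line_pairsE mem_ptranspose mkblock_swap.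
by rewrite [(A != set0) && _]andbC.
Qed.

End ValidLines.

Lemma line_pairs_inj a a' : valid a -> valid a' -> line_pairs a = line_pairs a' -> a = a'.
Proof.
have lines c c' : line_pairs c = line_pairs c' -> forall B, B \in c -> gline B -> B \in c'.
  move=> E B Bc; rewrite gline_parts => gB.
  have : (lpart B, rpart B) \in line_pairs c by rewrite line_pairsE mkblockK Bc.
  by rewrite E line_pairsE mkblockK => /andP[].
by move=> va va' E; apply: valid_eq_glines => //; apply: lines.
Qed.

Lemma circE a b : circ a b = add_points (circ_lines a b).
Proof. by []. Qed.

Lemma circ_linesP a b N :
  reflect (exists A B D, [/\ (A, B) \in line_pairs a, (B, D) \in line_pairs b & N = mkblock A D])
          (N \in circ_lines a b).
Proof.
apply: (iffP imset2P) => [[L M La] | [A [B [D []]]]].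
  rewrite inE => /andP[Mb /and3P[gL gM /eqP LM]] ->.
  exists (lpart L), (rpart L), (rpart M); split => //.
    by rewrite line_pairsE mkblockK La -gline_parts.
  by rewrite LM line_pairsE mkblockK Mb -gline_parts.
rewrite !line_pairsE => /and3P[ABa A0 B0] /and3P[BDb _ D0] ->.
exists (mkblock A B) (mkblock B D) => //; last by rewrite lpart_mkblock rpart_mkblock.
by rewrite inE BDb !gline_mkblock A0 B0 D0 rpart_mkblock lpart_mkblock eqxx.
Qed.

Lemma line_pairs_circ_lines a b :
  line_pairs (circ_lines a b) = rcomp (line_pairs a) (line_pairs b).
Proof.
apply/setP => -[A D]; rewrite line_pairsE; apply/idP/rcompP.
  by case/and3P => /circ_linesP[A' [B [D' [AB BD /mkblock_inj[-> ->]]]]] _ _; exists B.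
case=> B [AB BD]; move: (AB) (BD); rewrite !line_pairsE => /and3P[_ -> _] /and3P[_ _ ->].
by rewrite !andbT; apply/circ_linesP; exists A, B, D.
Qed.

Lemma line_pairs_circ a b : line_pairs (circ a b) = rcomp (line_pairs a) (line_pairs b).
Proof. by rewrite circE line_pairs_add_points line_pairs_circ_lines. Qed.

Lemma valid_circ a b : valid a -> valid b -> valid (circ a b).
Proof.
move=> va vb; have [[fa ga] [fb gb]] := (line_pairs_pbij va, line_pairs_pbij vb).
apply: valid_add_points; last first.
  move=> N /circ_linesP[A [B [D [AB BD ->]]]].
  by move: AB BD; rewrite !line_pairsE gline_mkblock => /and3P[_ -> _] /and3P[_ _ ->].
apply: trivIset_uniq => N1 N2 x /circ_linesP[A1 [B1 [D1 [AB1 BD1 ->]]]].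
case/circ_linesP => A2 [B2 [D2 [AB2 BD2 ->]]].
case: x => [i | j]; rewrite ?mkblock_inl ?mkblock_inr => x1 x2.
  have [AA BB] : A1 = A2 /\ B1 = B2.
    by apply: (line_pairs_uniq va AB1 AB2 (x := inl i)); rewrite mkblock_inl.
  by rewrite -BB in BD2; rewrite AA (fb _ _ _ BD1 BD2).
have [BB DD] : B1 = B2 /\ D1 = D2.
  by apply: (line_pairs_uniq vb BD1 BD2 (x := inr j)); rewrite mkblock_inr.
by rewrite -BB in AB2; rewrite DD (ga _ _ _ AB1 AB2).
Qed.

End Circ.

Section LineUnions.
Variable n : nat.
Implicit Types (A D : {set 'I_n}) (B M : {set XX n}) (a : PT n).

Definition union_of_lines a M :=
  [forall x in M, (pblock a x \subset M) && gline (pblock a x)].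

Definition line_unions a : {set {set 'I_n} * {set 'I_n}} :=
  [set p | [&& p.1 != set0, p.2 != set0 & union_of_lines a (mkblock p.1 p.2)]].

Lemma line_unionsE a A D : ((A, D) \in line_unions a) =
  [&& A != set0, D != set0 & union_of_lines a (mkblock A D)].
Proof. by rewrite inE. Qed.

Lemma union_of_linesP a M : reflect
  (forall x, x \in M -> pblock a x \subset M /\ gline (pblock a x)) (union_of_lines a M).
Proof. by apply: (iffP forall_inP) => uM x /uM; [case/andP | case=> -> ->]. Qed.

Lemma line_unions_sub a :
  line_unions a \subset setX (nonempty_subsets n) (nonempty_subsets n).
Proof. by apply/subsetP => -[A D]; rewrite line_unionsE in_setX !inE => /and3P[-> ->]. Qed.

Section ValidLineUnions.
Variable a : PT n.
Hypothesis va : valid a.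

Lemma line_unions_line B : B \in a -> gline B -> (lpart B, rpart B) \in line_unions a.
Proof.
move=> Ba gB; move: (gB); rewrite gline_parts line_unionsE mkblockK => /andP[-> ->] /=.
by apply/union_of_linesP => x xB; rewrite (pblock_validE va Ba xB) subxx.
Qed.

Lemma union_of_lines_ptranspose M :
  union_of_lines (ptranspose a) M = union_of_lines a (swap_side @: M).
Proof.
apply/union_of_linesP/union_of_linesP => uM x.
  rewrite mem_swap_set => /uM; rewrite pblock_ptranspose // swap_sideK gline_swap.
  case=> sub gx; split => //; apply/subsetP => y yx.
  by rewrite mem_swap_set; apply: (subsetP sub); rewrite mem_swap_set swap_sideK.
move=> xM; have := uM (swap_side x); rewrite mem_swap_set swap_sideK => /(_ xM) [sub gx].
rewrite pblock_ptranspose // gline_swap; split => //; apply/subsetP => y.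
by rewrite mem_swap_set => /(subsetP sub); rewrite mem_swap_set swap_sideK.
Qed.

Lemma line_unions_ptranspose : line_unions (ptranspose a) = rinv (line_unions a).
Proof.
apply/setP => -[A D]; rewrite rinvE !line_unionsE union_of_lines_ptranspose mkblock_swap.
by rewrite andbCA.
Qed.

Lemma line_unions_subset A D D' : (A, D) \in line_unions a -> (A, D') \in line_unions a ->
  D \subset D'.
Proof.
rewrite !line_unionsE => /and3P[_ _ /union_of_linesP uD] /and3P[_ _ /union_of_linesP uD'].
apply/subsetP => j jD; have jM : inr j \in mkblock A D by rewrite mkblock_inr.
have [subD /andP[/existsP[i ij] _]] := uD _ jM.
have iA : i \in A by rewrite -(mkblock_inl A D); apply: (subsetP subD).
have iM : inl i \in mkblock A D' by rewrite mkblock_inl.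
have [subD' _] := uD' _ iM; rewrite (pblock_validE va (pblock_valid va (inr j)) ij) in subD'.
by rewrite -(mkblock_inr A D'); apply: (subsetP subD'); apply: mem_pblock_valid.
Qed.

End ValidLineUnions.

Lemma line_unions_pbij a : valid a -> pbij (line_unions a).
Proof.
move=> va; have vt := valid_ptranspose va.
have tr A D : (A, D) \in line_unions a -> (D, A) \in line_unions (ptranspose a).
  by rewrite line_unions_ptranspose // rinvE.
split=> [A D D' AD AD' | A A' D /tr AD /tr A'D]; apply/eqP; rewrite eqEsubset.
  by rewrite (line_unions_subset va AD AD') (line_unions_subset va AD' AD).
by rewrite (line_unions_subset vt AD A'D) (line_unions_subset vt A'D AD).
Qed.

Lemma line_unions_inj a a' : valid a -> valid a' -> line_unions a = line_unions a' -> a = a'.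
Proof.
have lines c c' : valid c -> valid c' -> line_unions c = line_unions c' ->
    forall B, B \in c -> gline B -> B \in c'.
  move=> vc vc' E B Bc gB; have /andP[/existsP[i iB] _] := gB.
  have := line_unions_line vc Bc gB; rewrite E line_unionsE mkblockK.
  case/and3P => _ _ /union_of_linesP/(_ _ iB) [subB gi].
  have := line_unions_line vc' (pblock_valid vc' (inl i)) gi.
  rewrite -E line_unionsE mkblockK => /and3P[_ _ /union_of_linesP uc].
  have [subB' _] := uc _ (mem_pblock_valid vc' (inl i)).
  rewrite (pblock_validE vc Bc iB) in subB'.
  suff -> : B = pblock c' (inl i) by apply: pblock_valid.
  by apply/eqP; rewrite eqEsubset subB subB'.
by move=> va va' E; apply: valid_eq_glines => //; apply: lines.
Qed.

Lemma line_unions_single_line A D : A != set0 -> D != set0 ->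
  line_unions (single_line A D) = [set (A, D)].
Proof.
move=> A0 D0; have pbL := pblock_single_line _ A0 D0.
apply/setP => -[A' D']; rewrite line_unionsE in_set1; apply/idP/eqP; last first.
  case=> -> ->; rewrite A0 D0; apply/union_of_linesP => x xM.
  by rewrite pbL xM subxx gline_mkblock A0 D0.
case/and3P => /set0Pn[i iA'] _ /union_of_linesP uM'.
have sub : mkblock A' D' \subset mkblock A D.
  apply/subsetP => x /uM'[_]; rewrite pbL.
  by case: ifP => // _; rewrite gline_set1.
have iM' : inl i \in mkblock A' D' by rewrite mkblock_inl.
have [] := uM' _ iM'; rewrite pbL (subsetP sub) // => sub' _.
suff /mkblock_inj[-> ->] : mkblock A' D' = mkblock A D by [].
by apply/eqP; rewrite eqEsubset sub sub'.
Qed.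

End LineUnions.

Section StarProduct.
Variable n : nat.
Variables a b : PT n.
Hypotheses (va : valid a) (vb : valid b).
Local Notation sim := (sim a b).
Local Notation genrel := (genrel a b).
Local Notation bad := (bad a b).
Local Notation from_singleton := (from_singleton a b).
Implicit Types (A B D : {set 'I_n}) (x y u v : XX n) (w : XXX n).

Lemma genrel_sym : symmetric genrel.
Proof.
by move=> w w'; rewrite /Defs.genrel; congr orb;
  apply/existsP/existsP => -[B /and3P[BP w1 w2]]; exists B; rewrite BP w1 w2.
Qed.

Lemma sim_sym w w' : sim w w' = sim w' w.
Proof. exact: (sym_connect_sym genrel_sym). Qed.

Lemma sim_closed (Z : pred (XXX n)) : (forall w w', genrel w w' -> Z w -> Z w') ->
  forall w w', sim w w' -> Z w -> Z w'.
Proof.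
move=> Zcl w w' /(closed_connect (intro_closed (sym_connect_sym genrel_sym) Zcl)).
by rewrite !unfold_in => ->.
Qed.

Lemma genrel_a x y : y \in pblock a x -> genrel (ea x) (ea y).
Proof.
move=> yx; apply/orP; left; apply/exists_inP; exists (pblock a x); first exact: pblock_valid.
by rewrite !imset_f ?mem_pblock_valid.
Qed.

Lemma genrel_b x y : y \in pblock b x -> genrel (eb x) (eb y).
Proof.
move=> yx; apply/orP; right; apply/exists_inP; exists (pblock b x); first exact: pblock_valid.
by rewrite !imset_f ?mem_pblock_valid.
Qed.

Lemma genrelE w w' : genrel w w' ->
  (exists x y, [/\ w = ea x, w' = ea y & y \in pblock a x]) \/
  (exists x y, [/\ w = eb x, w' = eb y & y \in pblock b x]).
Proof.
case/orP => /exists_inP[B BP /andP[/imsetP[x xB ->] /imsetP[y yB ->]]].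
  by left; exists x, y; rewrite (pblock_validE va BP xB).
by right; exists x, y; rewrite (pblock_validE vb BP xB).
Qed.

Lemma from_singletonP w : from_singleton w ->
  (exists2 x, [set x] \in a & w = ea x) \/ (exists2 x, [set x] \in b & w = eb x).
Proof. by case/orP => /existsP[x /andP[xP /eqP ->]]; [left | right]; exists x. Qed.

Lemma from_singleton_a x : pblock a x = [set x] -> from_singleton (ea x).
Proof.
move=> ax; apply/orP; left; apply/existsP; exists x.
by rewrite eqxx andbT -ax pblock_valid.
Qed.

Lemma from_singleton_b x : pblock b x = [set x] -> from_singleton (eb x).
Proof.
move=> bx; apply/orP; right; apply/existsP; exists x.
by rewrite eqxx andbT -bx pblock_valid.
Qed.

Lemma badI u w : sim (eout u) w -> from_singleton w -> bad u.
Proof. by move=> uw fw; apply/existsP; exists w; rewrite uw fw. Qed.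

Lemma bad_sim u v : sim (eout u) (eout v) -> bad u = bad v.
Proof.
move=> uv; have vu : sim (eout v) (eout u) by rewrite sim_sym.
apply/existsP/existsP => -[w /andP[sw fw]]; exists w; rewrite fw andbT.
  exact: connect_trans vu sw.
exact: connect_trans uv sw.
Qed.

Lemma gline_sim_a u x : ~~ bad u -> sim (eout u) (ea x) -> gline (pblock a x).
Proof.
move=> ub ux; case: (pblock_kind va x) => // ax.
by case/negP: ub; apply: badI ux (from_singleton_a ax).
Qed.

Lemma gline_sim_b u x : ~~ bad u -> sim (eout u) (eb x) -> gline (pblock b x).
Proof.
move=> ub ux; case: (pblock_kind vb x) => // bx.
by case/negP: ub; apply: badI ux (from_singleton_b bx).
Qed.

Definition star_rel u v := (v == u) || sim (eout u) (eout v) && ~~ bad u.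

Definition star_block u := [set v | star_rel u v].

Lemma star_rel_equiv : {in [set: XX n] & &, equivalence_rel star_rel}.
Proof.
move=> u v w _ _ _; rewrite /star_rel; split; first by rewrite eqxx.
case: eqP => [-> // | _] /= /andP[uv ub].
have vb' : ~~ bad v by rewrite -(bad_sim uv).
have vu : sim (eout v) (eout u) by rewrite sim_sym.
rewrite ub vb' !andbT; case: (w =P v) => [-> | _]; first by rewrite uv orbT.
case: (w =P u) => [-> | _] /=; first by rewrite vu.
by apply/idP/idP; apply: connect_trans.
Qed.

Lemma star_partition : partition (star a b) setT.
Proof.
rewrite (_ : star a b = equivalence_partition star_rel setT).
  exact: equivalence_partitionP star_rel_equiv.
by apply/setP => N; apply/imsetP/imsetP => -[u _ ->]; exists u => //; apply/setP => v;
  rewrite !inE.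
Qed.

Lemma pblock_star u : pblock (star a b) u = star_block u.
Proof.
apply: def_pblock; first exact: partition_trivIset star_partition.
  by apply/imsetP; exists u.
by rewrite inE /star_rel eqxx.
Qed.

Lemma star_block_bad u : bad u -> star_block u = [set u].
Proof. by move=> ub; apply/setP => v; rewrite !inE /star_rel ub andbF orbF. Qed.

(* From [u], alternately follow a line of [a] and a line of [b]: the class
   of [u] reaches both [X] and [X']. *)
Lemma gline_star_block u : ~~ bad u -> gline (star_block u).
Proof.
move=> ub; have inS v : sim (eout u) (eout v) -> v \in star_block u.
  by move=> uv; rewrite inE /star_rel uv ub orbT.
have uu : u \in star_block u by rewrite inE /star_rel eqxx.
case: u ub inS uu => [i | k] ub inS uu.
  have /andP[_ /existsP[j ij]] := gline_sim_a ub (connect0 _ (ea (inl i))).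
  have ij' : sim (eout (inl i)) (eb (inl j)) := connect1 (genrel_a ij).
  have /andP[_ /existsP[k jk]] := gline_sim_b ub ij'.
  have ik : sim (eout (inl i)) (eout (inr k)) := connect_trans ij' (connect1 (genrel_b jk)).
  by apply/andP; split; apply/existsP; [exists i | exists k; apply: inS].
have /andP[/existsP[j kj] _] := gline_sim_b ub (connect0 _ (eb (inr k))).
have kj' : sim (eout (inr k)) (ea (inr j)) := connect1 (genrel_b kj).
have /andP[/existsP[i ji] _] := gline_sim_a ub kj'.
have ki : sim (eout (inr k)) (eout (inl i)) := connect_trans kj' (connect1 (genrel_a ji)).
by apply/andP; split; apply/existsP; [exists i; apply: inS | exists k].
Qed.

Lemma valid_star : valid (star a b).
Proof.
apply: valid_intro; first exact: star_partition.
move=> _ /imsetP[u _ ->]; change ((#|star_block u| == 1) || gline (star_block u)).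
case ub: (bad u); first by rewrite star_block_bad // cards1.
by rewrite gline_star_block ?orbT ?ub.
Qed.

(* [A \cup B'' \cup D'] is a union of [~]-classes free of singleton blocks. *)
Lemma line_unions_star_comp A B D : (A, B) \in line_unions a -> (B, D) \in line_unions b ->
  (A, D) \in line_unions (star a b).
Proof.
rewrite !line_unionsE => /and3P[A0 _ /union_of_linesP uAB] /and3P[_ D0 /union_of_linesP uBD].
pose Z w := match w with
  | inl (inl i) => i \in A | inl (inr j) => j \in B | inr k => k \in D end.
have Zea x : Z (ea x) = (x \in mkblock A B) by case: x => ?; rewrite /= inE.
have Zeb x : Z (eb x) = (x \in mkblock B D) by case: x => ?; rewrite /= inE.
have Zeo x : Z (eout x) = (x \in mkblock A D) by case: x => ?; rewrite /= inE.
have Zcl w w' : genrel w w' -> Z w -> Z w'.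
  case/genrelE => -[x [y [-> -> yx]]].
    by rewrite !Zea => /uAB[sub _]; apply: (subsetP sub).
  by rewrite !Zeb => /uBD[sub _]; apply: (subsetP sub).
have Zgood w : Z w -> ~~ from_singleton w.
  move=> Zw; apply/negP => /from_singletonP[[x xa wx] | [x xb wx]]; rewrite wx in Zw.
    by move: Zw; rewrite Zea => /uAB[_]; rewrite (pblock_set1 va xa) gline_set1.
  by move: Zw; rewrite Zeb => /uBD[_]; rewrite (pblock_set1 vb xb) gline_set1.
have good v : v \in mkblock A D -> ~~ bad v.
  rewrite -Zeo => Zv; apply/existsP => -[w /andP[vw fw]].
  by move/negP: (Zgood w (sim_closed Zcl vw Zv)).
rewrite A0 D0 /=; apply/union_of_linesP => v vM; rewrite pblock_star.
split; last exact: gline_star_block (good _ vM).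
apply/subsetP => w; rewrite inE /star_rel => /orP[/eqP -> // | /andP[vw _]].
by rewrite -Zeo; apply: (sim_closed Zcl vw); rewrite Zeo.
Qed.

(* The middle set [B] is read off the [~]-classes of the points of [A \cup D']. *)
Lemma line_unions_star_factor A D : (A, D) \in line_unions (star a b) ->
  exists2 B, (A, B) \in line_unions a & (B, D) \in line_unions b.
Proof.
rewrite line_unionsE => /and3P[A0 D0 /union_of_linesP uAD].
have good v : v \in mkblock A D -> ~~ bad v.
  move=> vM; apply/negP => vbad; have [_] := uAD _ vM.
  by rewrite pblock_star star_block_bad // gline_set1.
pose Z w := [exists v in mkblock A D, sim (eout v) w].
have Zout u : Z (eout u) = (u \in mkblock A D).
  apply/idP/idP => [/exists_inP[v vM vu] | uM].
    have [sub _] := uAD _ vM; apply: (subsetP sub).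
    by rewrite pblock_star inE /star_rel vu good ?orbT.
  by apply/exists_inP; exists u => //; apply: connect0.
have Zgood w : Z w -> ~~ from_singleton w.
  by case/exists_inP => v vM vw; apply: contraNN (good _ vM); apply: badI vw.
have Zcl w w' : Z w -> genrel w w' -> Z w'.
  case/exists_inP => v vM vw ww'; apply/exists_inP; exists v => //.
  exact: connect_trans vw (connect1 ww').
pose B := [set j | Z (inl (inr j))].
have Zea x : Z (ea x) = (x \in mkblock A B).
  case: x => [i | j]; last by rewrite mkblock_inr inE.
  by rewrite mkblock_inl -(mkblock_inl A D) -Zout.
have Zeb x : Z (eb x) = (x \in mkblock B D).
  case: x => [j | k]; first by rewrite mkblock_inl inE.
  by rewrite mkblock_inr -(mkblock_inr A D) -Zout.
have uA : union_of_lines a (mkblock A B).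
  apply/union_of_linesP => x; rewrite -Zea => Zx; split.
    by apply/subsetP => y yx; rewrite -Zea; apply: Zcl Zx (genrel_a yx).
  by case: (pblock_kind va x) => // ax; case/negP: (Zgood _ Zx); apply: from_singleton_a.
have uB : union_of_lines b (mkblock B D).
  apply/union_of_linesP => x; rewrite -Zeb => Zx; split.
    by apply/subsetP => y yx; rewrite -Zeb; apply: Zcl Zx (genrel_b yx).
  by case: (pblock_kind vb x) => // bx; case/negP: (Zgood _ Zx); apply: from_singleton_b.
have B0 : B != set0.
  case/set0Pn: A0 => i iA; have iM : inl i \in mkblock A B by rewrite mkblock_inl.
  have [sub /andP[_ /existsP[j ij]]] := union_of_linesP _ _ uA _ iM.
  by apply/set0Pn; exists j; rewrite -(mkblock_inr A B); apply: (subsetP sub).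
by exists B; rewrite line_unionsE ?A0 ?B0 ?D0.
Qed.

Lemma line_unions_star : line_unions (star a b) = rcomp (line_unions a) (line_unions b).
Proof.
apply/setP => -[A D]; apply/idP/rcompP => [/line_unions_star_factor[B AB BD] | [B []]].
  by exists B.
exact: line_unions_star_comp.
Qed.

End StarProduct.

Lemma card_nonempty_subsets n : #|nonempty_subsets n| = 2 ^ n - 1.
Proof.
rewrite (_ : nonempty_subsets n = [set~ set0]); last by apply/setP => A; rewrite !inE.
by rewrite cardsC1 -cardsT -powersetT card_powerset cardsT card_ord subn1.
Qed.

Section Embeddings.
Variable n : nat.

Lemma in_Pn (a : PT n) : (a \in Pn n) = valid a.
Proof. by rewrite inE. Qed.

Lemma circ_embedding : pbij_embedding (Pn n) (@circ n) (nonempty_subsets n)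
  (@line_pairs n) (@single_line n).
Proof.
split=> [a b | a b _ _ | a b | a | a | a _ | A D | A D]; rewrite ?in_Pn ?inE.
- exact: valid_circ.
- exact: line_pairs_circ.
- exact: line_pairs_inj.
- exact: line_pairs_pbij.
- by move=> va; exists (ptranspose a); rewrite ?in_Pn ?valid_ptranspose ?line_pairs_ptranspose.
- exact: line_pairs_sub.
- exact: valid_single_line.
- exact: line_pairs_single_line.
Qed.

Lemma star_embedding : pbij_embedding (Pn n) (@star n) (nonempty_subsets n)
  (@line_unions n) (@single_line n).
Proof.
split=> [a b | a b | a b | a | a | a _ | A D | A D]; rewrite ?in_Pn ?inE.
- exact: valid_star.
- exact: line_unions_star.
- exact: line_unions_inj.
- exact: line_unions_pbij.
- by move=> va; exists (ptranspose a); rewrite ?in_Pn ?valid_ptranspose ?line_unions_ptranspose.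
- exact: line_unions_sub.
- exact: valid_single_line.
- exact: line_unions_single_line.
Qed.

End Embeddings.

Theorem mainTheorem17 (n : nat) (hn : 2 <= n) (mul : PT n -> PT n -> PT n)
  (hmul : mul = @star n \/ mul = @circ n) :
  exists H : {set PT n},
    [/\ closed_inv_subsemigroup (Pn n) mul H,
        faithful (Pn n) mul H,
        #|cosets (Pn n) mul H| = 2 ^ n - 1 &
        forall K : {set PT n},
          closed_inv_subsemigroup (Pn n) mul K ->
          faithful (Pn n) mul K ->
          rep_equiv (Pn n) mul H K].
Proof.
have n_gt0 : 0 < n by apply: ltnW.
pose i0 := Ordinal n_gt0; pose i1 := Ordinal hn.
have pointD (i : 'I_n) : [set i] \in nonempty_subsets n.
  by rewrite inE; apply/set0Pn; exists i; rewrite set11.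
have i01 : [set i0] != [set i1] by rewrite (inj_eq set1_inj).
rewrite -card_nonempty_subsets.
case: hmul => ->.
  exact (stab_unique_faithful_rep (star_embedding n) (pointD i0) (pointD i1) i01).
exact (stab_unique_faithful_rep (circ_embedding n) (pointD i0) (pointD i1) i01).
Qed.
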